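(* If $x_1$ and $x_2$ are 4-cycles in the symmetric group $S_5$, then $(x_1x_2)^{15}=1$ or $(x_1x_2^2)^{15}=1$ or $(x_1x_2^3)^{15}=1$. *)

From mathcomp Require Import all_boot all_fingroup.
Set Implicit Arguments. Unset Strict Implicit. Unset Printing Implicit Defensive.

Definition is_4cycle (n : nat) (s : 'S_n) : Prop :=
  exists x : 'I_n, #|porbit s x| = 4 /\ forall y, y \notin porbit s x -> s y = y.

From mathcomp Require Import all_boot all_fingroup.
Set Implicit Arguments.
Unset Strict Implicit.
Unset Printing Implicit Defensive.
Local Open Scope group_scope.

(* A 4-cycle has order 4, so it is enough to check the claim for all pairs of
   elements s of S_5 with s^4 = 1 and s^2 <> 1 (these are exactly the 30
   four-cycles).  Encoding a permutation by its table of values in seq nat is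
   faithful and turns products and powers into list computations, so the 900
   pairs can be checked by evaluation. *)

Section PermTable.

Variable n : nat.

Definition perm_table (s : 'S_n) : seq nat := [seq val (s i) | i <- enum 'I_n].

(* [tmul t u] is the table of "first t, then u", matching [permM]. *)
Definition tmul (t u : seq nat) : seq nat := map (nth 0 u) t.

Definition texp (t : seq nat) (k : nat) : seq nat := iter k (tmul^~ t) (iota 0 n).

Lemma nth_perm_table (s : 'S_n) (i : 'I_n) : nth 0 (perm_table s) i = s i.
Proof. by rewrite (nth_map i) ?size_enum_ord // nth_ord_enum. Qed.

Lemma perm_table_inj : injective perm_table.
Proof.
by move=> s t est; apply/permP => i; apply: val_inj => /=; rewrite -!nth_perm_table est.
Qed.

Lemma perm_table1 : perm_table 1 = iota 0 n.
Proof. by rewrite -val_enum_ord; apply: eq_map => i; rewrite perm1. Qed.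

Lemma perm_tableM (s t : 'S_n) :
  perm_table (s * t) = tmul (perm_table s) (perm_table t).
Proof.
by rewrite /tmul -map_comp; apply: eq_map => i /=; rewrite nth_perm_table permM.
Qed.

Lemma perm_tableX (s : 'S_n) (k : nat) : perm_table (s ^+ k) = texp (perm_table s) k.
Proof. by elim: k => [|k IHk]; rewrite ?perm_table1 // expgSr perm_tableM IHk. Qed.

Lemma perm_table_permutation (s : 'S_n) : perm_table s \in permutations (iota 0 n).
Proof.
rewrite mem_permutations -val_enum_ord /perm_table (map_comp val s).
apply: perm_map; apply: uniq_perm.
- by rewrite (map_inj_uniq perm_inj) enum_uniq.
- exact: enum_uniq.
- by move=> j; rewrite mem_enum; apply/mapP; exists (s^-1 j); rewrite ?mem_enum ?permKV.
Qed.

Definition order4_tables : seq (seq nat) :=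
  [seq t <- permutations (iota 0 n) | (texp t 4 == iota 0 n) && (texp t 2 != iota 0 n)].

Lemma perm_table_order4 (s : 'S_n) :
  s ^+ 4 = 1 -> s ^+ 2 != 1 -> perm_table s \in order4_tables.
Proof.
move=> s4 s2; rewrite mem_filter perm_table_permutation andbT -!perm_tableX.
by rewrite -perm_table1 s4 eqxx (inj_eq perm_table_inj) s2.
Qed.

End PermTable.

Section FourCycle.

Variables (n : nat) (s : 'S_n).
Hypothesis s4cycle : is_4cycle s.

Lemma is_4cycle_expg4 : s ^+ 4 = 1.
Proof.
have [x [card_x fixed]] := s4cycle.
apply/permP => y; rewrite perm1 permX.
have [y_x | /fixed sy] := boolP (y \in porbit s x); last by elim: 4 => //= k ->.
have /eqP oy : porbit s y == porbit s x by rewrite eq_porbit_mem.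
by rewrite -card_x -oy iter_porbit.
Qed.

Lemma is_4cycle_expg2 : s ^+ 2 != 1.
Proof.
have [x [card_x _]] := s4cycle.
apply/eqP => /permP /(_ x); rewrite perm1 permX /= => ssx.
by have := uniq_traject_porbit s x; rewrite card_x /= ssx !inE eqxx !orbT.
Qed.

Lemma is_4cycle_table : perm_table s \in order4_tables n.
Proof. exact: perm_table_order4 is_4cycle_expg4 is_4cycle_expg2. Qed.

End FourCycle.

Lemma order4_tables5_products :
  all (fun t1 => all (fun t2 =>
         has (fun k => texp 5 (tmul t1 (texp 5 t2 k)) 15 == iota 0 5) [:: 1; 2; 3]%N)
       (order4_tables 5))
    (order4_tables 5).
Proof. by vm_compute. Qed.

Theorem lemma3 (x1 x2 : 'S_5) :
  is_4cycle x1 -> is_4cycle x2 ->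
  (x1 * x2) ^+ 15 = 1 \/ (x1 * x2 ^+ 2) ^+ 15 = 1 \/ (x1 * x2 ^+ 3) ^+ 15 = 1.
Proof.
move=> /is_4cycle_table table_x1 /is_4cycle_table table_x2.
have /allP/(_ _ table_x1)/allP/(_ _ table_x2) := order4_tables5_products.
case/hasP=> k k123 /eqP table_prod.
have prod_k : (x1 * x2 ^+ k) ^+ 15 = 1.
  by apply: perm_table_inj; rewrite perm_tableX perm_tableM perm_tableX perm_table1.
by move: prod_k; rewrite !inE in k123; case/or3P: k123 => /eqP ->; tauto.
Qed.
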